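(* Let $S$ be as in the context, $1\le k<n$, and let $\phi\in\mathcal{T}_k(S)$ with $y=l(\phi)$. Then the following are equivalent: (i) $\phi$ has a unique Weiner link $(\phi,\varphi,c)$ and $\varphi$ has no siblings in $\mathcal{T}(S)$; (ii) $y$ has exactly one predecessor $x$ in $G_k(S)$, and $y$ is the only successor of $x$ in $G_k(S)$. Moreover, in this case $x=l(\psi)$ where $\psi$ is the parent of $\varphi$ in $\mathcal{T}(S)$.
   Context: $\Sigma$ is a finite totally ordered alphabet containing a symbol $\$$ smaller than every other symbol. $S$ is a string of length $n\ge 2$ over $\Sigma$ whose last character is $\$$ and in which $\$$ occurs nowhere else; strings are indexed from $1$ and $S[i..j]$ denotes a substring. The rotations of $S$ are the $n$ strings $S[i..n]S[1..i-1]$, $i\in[1,n]$. The rotation-trie $\mathcal{T}(S)$ is the trie of the set of rotations of $S$: a rooted tree whose edges are labeled by single characters, the children of a node having distinct edge labels and being ordered from left to right by increasing edge label. The label $l(\phi)$ of a node $\phi$ is the concatenation of edge labels on the root-to-$\phi$ path, and its level is $|l(\phi)|$; leaves are the $n$ nodes at level $n$. $\mathcal{T}_k(S)$ denotes the set of nodes at level $k$. Siblings are distinct nodes with the same parent. A triple $(\phi,\varphi,c)$ with $\phi,\varphi$ nodes of $\mathcal{T}(S)$ and $c\in\Sigma$ is a Weiner link of $\phi$ if $l(\varphi)=c\,l(\phi)$, or $|l(\phi)|=n$ and $l(\varphi)=c\,l(\phi)[1..n-1]$. A Weiner link $(\phi,\varphi,c)$ is unique if there is no Weiner link $(\phi,\psi,d)$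 with $\psi\ne\varphi$. For $1\le k\le n$ let $Z_k(S)=S[1..n]S[1..k]$. The order-$k$ de Bruijn graph $G_k(S)$ is the directed multigraph whose node set is $\{Z_k(S)[i..i+k-1]: i\in[1,n]\}$ and which, for every string $z\in\Sigma^{k+1}$ occurring exactly $m\ge1$ times as a substring of $Z_k(S)$, contains the edge $(z[1..k],z[2..k+1])$ with multiplicity $m$. A node $x$ is a predecessor of $y$ (and $y$ a successor of $x$) if $G_k(S)$ contains an edge $(x,y)$ of positive multiplicity. *)

From HB Require Import structures.
From mathcomp Require Import all_boot all_order.
Set Implicit Arguments. Unset Strict Implicit. Unset Printing Implicit Defensive.

Section RotTrie.
Variable T : eqType.
Variable S : seq T.

Definition rotation (i : nat) : seq T := rot i S.

(* Nodes of the rotation-trie T(S) are identified with their labels: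
   a node is a prefix (possibly empty = root) of some rotation of S. *)
Definition is_node (u : seq T) : Prop :=
  exists2 i, i < size S & prefix u (rotation i).

Definition parent (u : seq T) : seq T := take (size u).-1 u.

Definition siblings (u v : seq T) : Prop :=
  is_node u /\ is_node v /\ u <> v /\ u <> [::] /\ v <> [::] /\ parent u = parent v.

Definition has_no_sibling (u : seq T) : Prop := forall v, ~ siblings u v.

Definition weiner_link (phi varphi : seq T) (c : T) : Prop :=
  is_node phi /\ is_node varphi /\
     (varphi = c :: phi \/
      (size phi = size S /\ varphi = c :: take (size S).-1 phi)).

Definition unique_weiner_link (phi varphi : seq T) (c : T) : Prop :=
  weiner_link phi varphi c /\
  (forall psi d, weiner_link phi psi d -> psi = varphi).

Definition Zk (k : nat) : seq T := S ++ take k S.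

Definition occurs (z w : seq T) : Prop :=
  exists i, i + size z <= size w /\ take (size z) (drop i w) = z.

(* Edge (x,y) with positive multiplicity in the order-k de Bruijn graph G_k(S):
   some z of length k+1 occurring in Z_k(S) with z[1..k] = x, z[2..k+1] = y. *)
Definition dB_edge (k : nat) (x y : seq T) : Prop :=
  exists z, size z = k.+1 /\ occurs z (Zk k) /\ x = take k z /\ y = behead z.

End RotTrie.

From HB Require Import structures.
From mathcomp Require Import all_boot all_order.
From mathcomp Require Import zify.

Set Implicit Arguments.
Unset Strict Implicit.

(* Windows of length k+1 of Z_k(S) are exactly the level-(k+1) nodes of the
   rotation-trie, so the edges of G_k(S) are the nodes z at level k+1, going
   from the parent of z to z minus its first character. A predecessor of y is
   thus a left extension c y that is a node, which for k < n is a Weiner link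
   of y, and a successor of x = parent (c y) is the tail of a node with parent
   x, i.e. of c y or of one of its siblings. Since k >= 1, x determines c. *)

Section RotationTrie.
Variable T : eqType.
Variable S : seq T.

Lemma take_drop_Zk k i : k < size S -> i < size S ->
  take k.+1 (drop i (Zk S k)) = take k.+1 (rotation S i).
Proof.
move=> hk hi; rewrite /Zk /rotation drop_cat hi /rot !take_cat size_drop.
case: ifP => // hlt; congr (_ ++ _).
by rewrite !take_takel //; lia.
Qed.

Lemma occurs_Zk k z : k < size S -> size z = k.+1 ->
  occurs z (Zk S k) <-> is_node S z.
Proof.
move=> hk hz; rewrite /is_node /occurs /Zk size_cat size_take hk hz.
split=> [[i [hi hw]] | [i hi]].
- exists i; first lia.
  by rewrite prefixE hz -take_drop_Zk ?hw //; lia.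
- rewrite prefixE hz -take_drop_Zk // => /eqP hw.
  by exists i; split; first lia.
Qed.

Lemma dB_edgeP k x y : k < size S ->
  dB_edge S k x y <->
  exists z, [/\ is_node S z, size z = k.+1, x = take k z & y = behead z].
Proof.
move=> hk; split=> [[z [hz [hocc [hx hy]]]] | [z [hnode hz hx hy]]].
- by exists z; split => //; apply/(occurs_Zk hk hz).
- by exists z; do !split => //; apply/(occurs_Zk hk hz).
Qed.

Lemma weiner_linkE phi psi d : size phi < size S ->
  weiner_link S phi psi d <-> [/\ is_node S phi, is_node S psi & psi = d :: phi].
Proof.
move=> hphi; split=> [[hn1 [hn2 [//|[hsz _]]]] | [hn1 hn2 hpsi]].
- by rewrite hsz ltnn in hphi.
- by do !split => //; left.
Qed.

Lemma unique_weiner_linkP phi varphi c : size phi < size S ->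
  unique_weiner_link S phi varphi c <->
  [/\ is_node S phi, varphi = c :: phi, is_node S varphi
    & forall d, is_node S (d :: phi) -> d = c].
Proof.
move=> hphi; split=> [[/(weiner_linkE _ _ hphi) [hn1 hn2 ev] huniq] | [hn1 ev hn2 huniq]].
- split=> // d hd.
  suff [] : d :: phi = c :: phi by [].
  by rewrite -ev; apply: (huniq _ d); apply/weiner_linkE.
- split=> [|psi d /(weiner_linkE _ _ hphi) [_ hd ep]]; first exact/weiner_linkE.
  by subst psi; rewrite ev (huniq d hd).
Qed.

Lemma has_no_siblingP u : is_node S u -> u != [::] ->
  has_no_sibling S u <->
  (forall v, is_node S v -> size v = size u -> parent v = parent u -> v = u).
Proof.
move=> hnu hu; split=> [hns v hv hsz hpar | huniq v [_ [hnv [neq [_ [hv0 hpar]]]]]].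
- apply/eqP/negPn/negP => /eqP neq.
  apply: (hns v); do !split=> //; [by move=> e; apply: neq | exact/eqP |].
  by move=> e; rewrite e in hsz; case: u hu hsz {hnu hns hpar neq}.
- apply: neq; symmetry; apply: huniq => //.
  move: (congr1 size hpar) hu; rewrite /parent !size_take !ltn_predL.
  by case: u {hnu hpar} => // a u; case: v {hnv} hv0 => // b v _ /= ->.
Qed.

Variables (k : nat) (phi : seq T).
Hypotheses (hphi : size phi = k) (hk0 : 0 < k) (hkS : k < size S).

Lemma take_cons_inj d e : take k (d :: phi) = take k (e :: phi) -> d = e.
Proof. by case: k hk0 => // k' _ [->]. Qed.

Lemma parent_consE d : parent (d :: phi) = take k (d :: phi).
Proof. by rewrite /parent /= hphi. Qed.

Lemma dB_edge_predP x :
  dB_edge S k x phi <-> exists2 d, is_node S (d :: phi) & x = take k (d :: phi).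
Proof.
rewrite dB_edgeP //; split=> [[[|d t] [hn _ hx /= ht]] | [d hn hx]] //.
- by rewrite -ht in hn hx; exists d.
- by exists (d :: phi); split; rewrite //= hphi.
Qed.

Lemma dB_pred_uniqueP d :
  (forall x, dB_edge S k x phi -> x = take k (d :: phi)) <->
  (forall e, is_node S (e :: phi) -> e = d).
Proof.
split=> [huniq e he | huniq x /dB_edge_predP [e he ->]].
- by apply: take_cons_inj; apply: huniq; apply/dB_edge_predP; exists e.
- by rewrite (huniq e he).
Qed.

Lemma dB_succ_uniqueP d :
  (forall y, dB_edge S k (take k (d :: phi)) y -> y = phi) <->
  (forall v, is_node S v -> size v = size (d :: phi) ->
     parent v = parent (d :: phi) -> v = d :: phi).
Proof.
rewrite parent_consE /= hphi.
split=> [huniq [|a v] // hv hsz | huniq y /dB_edgeP [//|v [hv hsz hx ->]]].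
- rewrite /parent hsz => hpar.
  have ev : v = phi by apply: huniq; apply/(dB_edgeP _ _ hkS); exists (a :: v).
  by rewrite ev in hpar *; rewrite (take_cons_inj hpar).
- by rewrite (huniq v) //= ?hphi // /parent hsz hx.
Qed.

End RotationTrie.

Theorem mainTheorem2 (disp : Order.disp_t) (Sigma : finOrderType disp)
    (dollar : Sigma) (S : seq Sigma) (n k : nat) (phi : seq Sigma) :
  (forall a : Sigma, (dollar <= a)%O) ->
  size S = n -> 2 <= n ->
  last dollar S = dollar -> dollar \notin take n.-1 S ->
  1 <= k -> k < n ->
  is_node S phi -> size phi = k ->
  let y := phi in
  ((exists varphi c,
      unique_weiner_link S phi varphi c /\ has_no_sibling S varphi)
   <->
   (exists x,
      [/\ dB_edge S k x y,
          (forall x', dB_edge S k x' y -> x' = x) &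
          (forall y', dB_edge S k x y' -> y' = y)]))
  /\
  (forall varphi c x,
      unique_weiner_link S phi varphi c -> has_no_sibling S varphi ->
      dB_edge S k x y ->
      (forall x', dB_edge S k x' y -> x' = x) ->
      (forall y', dB_edge S k x y' -> y' = y) ->
      x = parent varphi).
Proof.
move=> _ <- _ _ _ hk0 hkS hnode hphi /=.
have hps : size phi < size S by rewrite hphi.
have uwlP := unique_weiner_linkP _ _ hps.
have predP := dB_pred_uniqueP hphi hk0 hkS.
have succP := dB_succ_uniqueP hphi hk0 hkS.
have noSibP d (hd : is_node S (d :: phi)) := has_no_siblingP hd isT.
split; last first.
  move=> varphi c x /uwlP [_ -> hv _] _ _ hpred _.
  rewrite (parent_consE hphi); symmetry; apply: hpred.
  by apply/(dB_edge_predP hphi hkS); exists c.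
split=> [[varphi [c [/uwlP [_ -> hv huniq] hns]]] | [x [hedge hpred hsucc]]].
- exists (take k (c :: phi)); split.
  + by apply/(dB_edge_predP hphi hkS); exists c.
  + exact/predP.
  + exact/succP/(noSibP _ hv).
- have [d hd hx] := proj1 (dB_edge_predP hphi hkS x) hedge.
  rewrite hx in hpred hsucc.
  exists (d :: phi), d; split; last exact/(noSibP _ hd)/succP.
  by apply/uwlP; split=> //; apply/predP.
Qed.
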